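(* Let $f:\mathbb{R}^n \to \mathbb{R}$ be strongly convex and piecewise linear-quadratic, with a fixed representation by polyhedral sets $F_1,\dots,F_p$ as described in the context, and let $C \subset \mathbb{R}^n$ be a nonempty closed convex set. Then for every $R>0$ there exists $L>0$ such that for all $x \in B_R$ and all $x^* \in \partial f(x)$, \[ \operatorname{dist}_f^{x^*}(x,C)^2 \le \begin{cases} L \cdot \operatorname{dist}(x,C)^2, & \text{if } F_x \cap C=\emptyset, \\ L \cdot \operatorname{dist}(x,F_x \cap C)^2, & \text{if } F_x \cap C \neq\emptyset. \end{cases} \]
   Context: $f$ is strongly convex if there is $\alpha>0$ with $f(y)\ge f(x)+\langle x^*,y-x\rangle+\frac{\alpha}{2}\|y-x\|_2^2$ for all $x,y\in\mathbb{R}^n$, $x^*\in\partial f(x)$. A convex $f:\mathbb{R}^n\to\mathbb{R}$ is piecewise linear-quadratic if there are finitely many polyhedral sets $F_i\subset\mathbb{R}^n$, $i\in I=\{1,\dots,p\}$, whose union is $\mathbb{R}^n$, such that on each $F_i$, $f(x)=\frac12\langle x,A_ix\rangle+\langle a_i,x\rangle+\alpha_i$ with symmetric positive semidefinite $A_i\in\mathbb{R}^{n\times n}$, $a_i\in\mathbb{R}^n$, $\alpha_i\in\mathbb{R}$. For $x\in\mathbb{R}^n$ set $I_f(x)=\{i\in I: x\in F_i\}$ and $F_x=\bigcap_{i\in I_f(x)}F_i$. $B_R=\{x\in\mathbb{R}^n:\|x\|_2\le R\}$. For $x^*\in\partial f(x)$, the Bregman distance is $D_f^{x^*}(x,y)=f(y)-f(x)-\langle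 x^*,y-x\rangle$ and $\operatorname{dist}_f^{x^*}(x,C)^2:=\min_{y\in C}D_f^{x^*}(x,y)$. $\operatorname{dist}(x,S)$ is the Euclidean distance from $x$ to a set $S$. *)

From HB Require Import structures.
From mathcomp Require Import all_boot all_order all_algebra.
From mathcomp Require Import all_classical all_reals all_analysis.
Set Implicit Arguments. Unset Strict Implicit. Unset Printing Implicit Defensive.
Import Order.TTheory GRing.Theory Num.Theory.
Import numFieldNormedType.Exports.
Local Open Scope ring_scope.
Local Open Scope classical_set_scope.

Section Defs.
Variables (R : realType) (n : nat).

Definition dotp (u v : 'rV[R]_n) : R := \sum_(i < n) u 0 i * v 0 i.
Definition norm2 (u : 'rV[R]_n) : R := Num.sqrt (dotp u u).

Definition dist (x : 'rV[R]_n) (S : set 'rV[R]_n) : R :=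
  inf [set norm2 (x - y) | y in S].

Definition subdiff (f : 'rV[R]_n -> R) (x : 'rV[R]_n) : set 'rV[R]_n :=
  [set xs | forall y, f x + dotp xs (y - x) <= f y].

Definition strongly_convex (f : 'rV[R]_n -> R) : Prop :=
  exists alpha : R, 0 < alpha /\
    forall x y xs, subdiff f x xs ->
      f x + dotp xs (y - x) + alpha / 2 * (norm2 (y - x)) ^+ 2 <= f y.

Definition polyhedral (P : set 'rV[R]_n) : Prop :=
  exists (m : nat) (A : 'M[R]_(m, n)) (b : 'rV[R]_m),
    P = [set x | forall j, (x *m A^T) 0 j <= b 0 j].

Definition sym_psd (A : 'M[R]_n) : Prop :=
  A^T = A /\ forall x : 'rV[R]_n, 0 <= (x *m A *m x^T) 0 0.

Definition plq_rep (p : nat) (f : 'rV[R]_n -> R) (F : 'I_p -> set 'rV[R]_n)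
    (Q : 'I_p -> 'M[R]_n) (a : 'I_p -> 'rV[R]_n) (al : 'I_p -> R) : Prop :=
  (forall i, polyhedral (F i)) /\
  \bigcup_(i in [set: 'I_p]) F i = [set: 'rV[R]_n] /\
  forall i, sym_psd (Q i) /\
    forall x, F i x -> f x = 2^-1 * (x *m Q i *m x^T) 0 0 + dotp (a i) x + al i.

Definition Fx (p : nat) (F : 'I_p -> set 'rV[R]_n) (x : 'rV[R]_n) : set 'rV[R]_n :=
  \bigcap_(i in [set i | F i x]) F i.

Definition bregman (f : 'rV[R]_n -> R) (xs x y : 'rV[R]_n) : R :=
  f y - f x - dotp xs (y - x).

(* dist_f^{x*}(x,C)^2 := min_{y in C} D_f^{x*}(x,y)  (written as an infimum) *)
Definition distf2 (f : 'rV[R]_n -> R) (xs x : 'rV[R]_n) (C : set 'rV[R]_n) : R :=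
  inf [set bregman f xs x y | y in C].

Definition convexS (C : set 'rV[R]_n) : Prop :=
  forall x y (t : R), C x -> C y -> 0 <= t -> t <= 1 -> C ((1 - t) *: x + t *: y).

End Defs.

From HB Require Import structures.
From mathcomp Require Import all_boot all_order all_algebra.
From mathcomp Require Import all_classical all_reals all_analysis.
From mathcomp Require Import ring lra.
Import Order.TTheory GRing.Theory Num.Theory.
Import numFieldNormedType.Exports.
Local Open Scope ring_scope.
Local Open Scope classical_set_scope.

(* On F_x the bound comes from a single quadratic piece: the pieces are closed,
   so for small t > 0 the point x - t (y - x) lies in a piece F_j containing x,
   and F_j then contains every y in F_x.  On F_j the function f is quadratic,
   and the subgradient inequality at x - t (y - x) bounds D_f(x, y) by the
   curvature <Q_j (y - x), y - x>.  If F_x misses C, then x lies in the compact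
   set B_R ∩ F_x, at positive distance from C; this distance is uniform because
   only finitely many sets F_x occur.  Since f is bounded on bounded sets,
   D_f(x, y0) is bounded for a fixed y0 in C, and dist(x, C)^2 is bounded below. *)

Section Euclidean.
Context {R : realType} {n : nat}.
Implicit Types (u v w : 'rV[R]_n).

Lemma dotpDr u v w : dotp u (v + w) = dotp u v + dotp u w.
Proof. by rewrite /dotp -big_split; apply: eq_bigr => i _; rewrite mxE mulrDr. Qed.

Lemma dotpZr u (c : R) v : dotp u (c *: v) = c * dotp u v.
Proof. by rewrite /dotp mulr_sumr; apply: eq_bigr => i _; rewrite mxE mulrCA. Qed.

Lemma dotpNr u v : dotp u (- v) = - dotp u v.
Proof. by rewrite -scaleN1r dotpZr mulN1r. Qed.

Lemma normr_coord_le u k : `|u 0 k| <= `|u|.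
Proof.
by rewrite [leRHS]/Num.Def.normr /= mx_normrE; apply/bigmax_geP; right; exists (0, k).
Qed.

Lemma coord_le_norm2 u k : `|u 0 k| <= norm2 u.
Proof.
rewrite /norm2 -sqrtr_sqr ler_sqrt; last by apply: sumr_ge0 => i _; rewrite sqr_ge0.
rewrite /dotp (bigD1 k) //= -expr2 lerDl.
by apply: sumr_ge0 => i _; rewrite -expr2 sqr_ge0.
Qed.

Lemma normr_le_norm2 u : `|u| <= norm2 u.
Proof.
rewrite [leLHS]/Num.Def.normr /= mx_normrE; apply: bigmax_le => [|[i k] _] /=.
  exact: sqrtr_ge0.
by rewrite (ord1 i); exact: coord_le_norm2.
Qed.

Lemma dotp_le a u : `|dotp a u| <= (\sum_k `|a 0 k|) * `|u|.
Proof.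
rewrite /dotp mulr_suml; apply: le_trans (ler_norm_sum _ _ _) _.
by apply: ler_sum => k _; rewrite normrM ler_wpM2l ?normr_coord_le.
Qed.

End Euclidean.

Section QuadraticForm.
Context {R : realType} {n : nat}.
Implicit Types (u v w : 'rV[R]_n).

Definition qform (Q : 'M[R]_n) u v : R := (u *m Q *m v^T) 0 0.

Lemma qform_sym Q u v : Q^T = Q -> qform Q u v = qform Q v u.
Proof.
move=> sQ; have -> : qform Q u v = (u *m Q *m v^T)^T 0 0 by rewrite mxE.
by rewrite !trmx_mul trmxK sQ mulmxA.
Qed.

Lemma qformDl Q u v w : qform Q (u + v) w = qform Q u w + qform Q v w.
Proof. by rewrite /qform !mulmxDl mxE. Qed.

Lemma qformDr Q u v w : qform Q u (v + w) = qform Q u v + qform Q u w.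
Proof. by rewrite /qform linearD /= mulmxDr mxE. Qed.

Lemma qformZl Q c u w : qform Q (c *: u) w = c * qform Q u w.
Proof. by rewrite /qform -!scalemxAl mxE. Qed.

Lemma qformZr Q c u w : qform Q u (c *: w) = c * qform Q u w.
Proof. by rewrite /qform linearZ /= -scalemxAr mxE. Qed.

Lemma qform_le Q u : `|qform Q u u| <= (\sum_i \sum_j `|Q i j|) * `|u| ^+ 2.
Proof.
rewrite exchange_big /qform !mxE mulr_suml; apply: le_trans (ler_norm_sum _ _ _) _.
apply: ler_sum => l _; rewrite !mxE !mulr_suml.
apply: le_trans (ler_norm_sum _ _ _) _; apply: ler_sum => k _.
rewrite !normrM mulrC mulrA [leRHS]mulrC ler_wpM2r //.
by rewrite expr2 ler_pM ?normr_coord_le.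
Qed.

Definition quad (Q : 'M[R]_n) (a : 'rV[R]_n) (al : R) u : R :=
  2^-1 * qform Q u u + dotp a u + al.

Lemma quad_line Q a al u v (c : R) : Q^T = Q ->
  quad Q a al (u + c *: v) =
  quad Q a al u + c * (qform Q u v + dotp a v) + c ^+ 2 / 2 * qform Q v v.
Proof.
move=> sQ; rewrite /quad !(qformDl, qformDr, qformZl, qformZr, dotpDr, dotpZr).
by rewrite (qform_sym Q v u sQ); field.
Qed.

Lemma quad_le Q a al u (N : R) : `|u| <= N ->
  `|quad Q a al u| <=
  2^-1 * ((\sum_i \sum_j `|Q i j|) * N ^+ 2) + (\sum_k `|a 0 k|) * N + `|al|.
Proof.
move=> uN; have N0 : 0 <= N := le_trans (normr_ge0 _) uN.
have sQ0 : 0 <= \sum_i \sum_j `|Q i j| by do 2!apply: sumr_ge0 => ? _.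
rewrite /quad; apply: le_trans (ler_normD _ _) _; rewrite lerD2r.
apply: le_trans (ler_normD _ _) _; apply: lerD.
  rewrite normrM ger0_norm ?invr_ge0 // ler_wpM2l ?invr_ge0 //.
  apply: le_trans (qform_le Q u) _; rewrite ler_wpM2l // lerXn2r ?nnegrE //.
apply: le_trans (dotp_le a u) _; rewrite ler_wpM2l //.
by apply: sumr_ge0 => ? _.
Qed.

Lemma quad_bregman_le {Q a al xs u v} {t : R} : Q^T = Q -> 0 <= qform Q v v ->
  0 < t -> t <= 1 ->
  quad Q a al u + dotp xs (u - t *: v - u) <= quad Q a al (u - t *: v) ->
  quad Q a al (u + v) - quad Q a al u - dotp xs v <= qform Q v v.
Proof.
move=> sQ v0 t0 t1; rewrite [u - _ - u]addrAC subrr add0r -scaleNr dotpZr.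
have := quad_line Q a al u v 1 sQ; rewrite scale1r => ->.
rewrite quad_line //.
set s := dotp xs v; set b := qform Q u v + dotp a v; set c := qform Q v v => ht.
(* The hypothesis gives b - s <= t c / 2, and the goal reads b - s + c / 2 <= c. *)
have : t * (b - s) <= t * (t * c / 2) by lra.
rewrite ler_pM2l // => bs; have : 0 <= (1 - t) * c by rewrite mulr_ge0 ?subr_ge0.
lra.
Qed.

End QuadraticForm.

Section Topology.
Context {R : realType}.

Lemma compact_closed_separated {V : normedModType R} {K C : set V} :
  compact K -> closed C -> K `&` C = set0 ->
  \forall e \near 0^'+, forall z y, K z -> C y -> e <= `|z - y|.
Proof.
move=> /compact_near_coveringP cK cC KC.
apply: filterS (cK R _ (fun e z => forall y, C y -> e <= `|z - y|) _ _).
  by move=> e eK z y Kz; apply: eK.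
move=> z Kz; have nCz : ~ C z by move=> Cz; have : (K `&` C) z by []; rewrite KC.
have /nbhs_ballP[eps eps0 ballC] : nbhs z (~` C).
  by apply: open_nbhs_nbhs; split => //; exact: closed_openC.
have farC y : C y -> eps <= `|z - y|.
  move=> Cy; rewrite leNgt; apply/negP => zy.
  by apply: (ballC y) => //; rewrite -ball_normE.
near=> z' e => /= y Cy.
have zz' : `|z - z'| < eps / 2 by near: z'; apply: cvgr_dist_lt => //; exact: divr_gt0.
have e2 : e < eps / 2 by near: e; apply: nbhs_right_lt; exact: divr_gt0.
have := farC y Cy; have := ler_distD z' z y; lra.
Unshelve. all: by end_near.
Qed.

Lemma coord_mulmx_continuous n m (M : 'M[R]_(n, m)) j :
  continuous (fun z : 'rV[R]_n => (z *m M) 0 j).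
Proof.
have -> : (fun z : 'rV[R]_n => (z *m M) 0 j) = fun z => \sum_k z 0 k * M k j.
  by apply/funext => z; rewrite mxE.
apply: continuous_big => [|k _]; first exact: add_continuous.
by move=> z; apply: continuousM; [exact: coord_continuous | exact: cst_continuous].
Qed.

Lemma polyhedral_closed n (P : set 'rV[R]_n) : polyhedral P -> closed P.
Proof.
move=> [m [A [b ->]]].
have -> : [set x : 'rV[R]_n | forall j, (x *m A^T) 0 j <= b 0 j] =
    \bigcap_(j in [set: 'I_m]) ((fun z => (z *m A^T) 0 j) @^-1` [set v | v <= b 0 j]).
  by apply/seteqP; split => [x H j _ | x H j]; [exact: H | exact: H].
apply: closed_bigI => j _; apply: preimage_closed; last exact: closed_le.
by move=> z _; exact: coord_mulmx_continuous.
Qed.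

End Topology.

Section Bregman.
Context {R : realType} {n : nat}.
Implicit Types (f : 'rV[R]_n -> R) (x y xs : 'rV[R]_n) (C S : set 'rV[R]_n).

Lemma bregman_ge0 {f xs x} y : subdiff f x xs -> 0 <= bregman f xs x y.
Proof. by move=> /(_ y); rewrite /bregman; lra. Qed.

Lemma bregman_le_bound {f xs x} y {M : R} : subdiff f x xs ->
  `|f y| <= M -> `|f x| <= M -> `|f (x + (x - y))| <= M -> bregman f xs x y <= 4 * M.
Proof.
move=> /(_ (x + (x - y))); rewrite addrAC subrr add0r /bregman -[y - x]opprB dotpNr.
by move=> sub_z /ler_normlP[_ fy] /ler_normlP[fx _] /ler_normlP[_ fz]; lra.
Qed.

Lemma distf2_le_bregman {f xs x C y} : subdiff f x xs -> C y ->
  distf2 f xs x C <= bregman f xs x y.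
Proof.
move=> xs_sub Cy; apply: ge_inf; last by exists y.
by exists 0 => _ [z _ <-]; exact: bregman_ge0.
Qed.

Lemma distf2_le_sqr_dist {f xs x C S} {L : R} : subdiff f x xs -> 0 < L ->
  S `<=` C -> S !=set0 ->
  (forall y, S y -> bregman f xs x y <= L * norm2 (x - y) ^+ 2) ->
  distf2 f xs x C <= L * dist x S ^+ 2.
Proof.
move=> xs_sub L0 SC [y0 Sy0] SL; set D := distf2 f xs x C.
have D0 : 0 <= D.
  apply: lb_le_inf => [|_ [y _ <-]]; last exact: bregman_ge0.
  by exists (bregman f xs x y0), y0; first exact: SC.
have DL : Num.sqrt (D / L) <= dist x S.
  apply: lb_le_inf => [|_ [y Sy <-]]; first by exists (norm2 (x - y0)), y0.
  rewrite -[norm2 _]ger0_norm ?sqrtr_ge0 // -sqrtr_sqr ler_sqrt ?sqr_ge0 //.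
  rewrite ler_pdivrMr // mulrC.
  by apply: le_trans (SL y Sy); apply: distf2_le_bregman => //; exact: SC.
rewrite mulrC -ler_pdivrMr // -(sqr_sqrtr (divr_ge0 D0 (ltW L0))).
by rewrite lerXn2r ?nnegrE ?sqrtr_ge0 // (le_trans (sqrtr_ge0 _) DL).
Qed.

End Bregman.

Section PiecewiseLinearQuadratic.
Context {R : realType} {n p : nat} {f : 'rV[R]_n -> R} {F : 'I_p -> set 'rV[R]_n}.
Context {Q : 'I_p -> 'M[R]_n} {a : 'I_p -> 'rV[R]_n} {al : 'I_p -> R}.
Hypothesis plqf : plq_rep f F Q a al.

Lemma plq_closed i : closed (F i).
Proof. by case: plqf => Fpoly _; exact: polyhedral_closed (Fpoly i). Qed.

Lemma plq_cover x : exists i, F i x.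
Proof.
case: plqf => _ [cover _]; have : (\bigcup_(i in setT) F i) x by rewrite cover.
by case=> i _ Fix; exists i.
Qed.

Lemma plq_sym_psd i : sym_psd (Q i).
Proof. by case: plqf => _ [_ /(_ i) []]. Qed.

Lemma plq_quad {i x} : F i x -> f x = quad (Q i) (a i) (al i) x.
Proof. by move=> Fix; case: plqf => _ [_ /(_ i) [_ /(_ x Fix)]]. Qed.

Lemma plq_bounded (N : R) : exists M, forall z, `|z| <= N -> `|f z| <= M.
Proof.
have : \forall M \near +oo, forall i z, `|z| <= N -> `|quad (Q i) (a i) (al i) z| <= M.
  apply: filter_forall => i.
  set B := 2^-1 * ((\sum_k \sum_l `|Q i k l|) * N ^+ 2)
           + (\sum_k `|a i 0 k|) * N + `|al i|.
  apply: filterS (nbhs_pinfty_ge (num_real B)) => M BM z zN.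
  exact: le_trans (quad_le _ _ _ _ _ zN) BM.
move=> /filter_ex[M fM]; exists M => z zN; have [i Fiz] := plq_cover z.
by rewrite (plq_quad Fiz); exact: fM.
Qed.

Lemma plq_active_piece_near x d :
  \forall t \near 0^'+, exists2 j, F j x & F j (x - t *: d).
Proof.
have : \forall t \near 0^'+, forall j, F j (x - t *: d) -> F j x.
  apply: filter_forall => j; have [Fjx | nFjx] := pselect (F j x).
    by apply: nearW.
  have /nbhs_ballP[eps eps0 ballF] : nbhs x (~` F j).
    by apply: open_nbhs_nbhs; split => //; exact/closed_openC/plq_closed.
  have d1 : 0 < `|d| + 1 by rewrite ltr_wpDl.
  near=> t => Fjt; exfalso; apply: (ballF (x - t *: d)) => //.
  rewrite -ball_normE /= opprB addrC subrK normrZ gtr0_norm; last first.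
    by near: t; exact: nbhs_right_gt.
  have tlt : t < eps / (`|d| + 1) by near: t; apply: nbhs_right_lt; exact: divr_gt0.
  rewrite ltr_pdivlMr // in tlt; apply: le_lt_trans tlt.
  rewrite ler_wpM2l ?lerDl //; near: t; exact: nbhs_right_ge.
move=> pieces_near; near=> t; have [j Fjt] := plq_cover (x - t *: d).
by exists j => //; exact: (near pieces_near t).
Unshelve. all: by end_near.
Qed.

Lemma plq_bregman_quadratic_bound : exists2 L, 0 < L &
  forall x xs y, subdiff f x xs -> Fx F x y -> bregman f xs x y <= L * norm2 (x - y) ^+ 2.
Proof.
pose L := \sum_j \sum_k \sum_l `|Q j k l|.
have L0 : 0 <= L by do 3!apply: sumr_ge0 => ? _.
exists (1 + L) => [|x xs y xs_sub Fxy]; first by rewrite ltr_pwDl.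
set d := y - x; have yE : y = x + d by rewrite addrC subrK.
have [t [t0 t1 [j Fjx Fjt]]] :
    exists t, [/\ 0 < t, t <= 1 & exists2 j, F j x & F j (x - t *: d)].
  near (0 : R)^'+ => t; exists t; split; near: t.
  - exact: nbhs_right_gt.
  - exact: nbhs_right_le.
  - exact: plq_active_piece_near.
have [sQ Q0] := plq_sym_psd j.
have Fjy : F j y := Fxy j Fjx.
have := xs_sub (x - t *: d); rewrite (plq_quad Fjx) (plq_quad Fjt).
move=> /(quad_bregman_le sQ (Q0 d) t0 t1).
rewrite /bregman (plq_quad Fjx) (plq_quad Fjy) -yE => /le_trans; apply.
apply: le_trans (ler_norm _) _; apply: le_trans (qform_le _ _) _.
have dxy : `|d| <= norm2 (x - y) by rewrite -normrN opprB normr_le_norm2.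
have d_ge0 := le_trans (normr_ge0 _) dxy.
apply: ler_pM; rewrite ?sqr_ge0 ?lerXn2r ?nnegrE ?normr_ge0 //.
  by do 2!apply: sumr_ge0 => ? _.
rewrite /L (bigD1 j) //=.
have : 0 <= \sum_(i | i != j) \sum_k \sum_l `|Q i k l|.
  by apply: sumr_ge0 => i _; do 2!apply: sumr_ge0 => ? _.
lra.
Unshelve. all: by end_near.
Qed.

Lemma plq_separation {C : set 'rV[R]_n} (r : R) : closed C -> C !=set0 ->
  exists2 e, 0 < e & forall x, `|x| <= r -> Fx F x `&` C = set0 -> e <= dist x C.
Proof.
move=> cC [y0 Cy0].
(* Every F_x is one of the finitely many intersections S J. *)
pose S (J : {set 'I_p}) := \bigcap_(i in [set i | i \in J]) F i.
have : \forall e \near 0^'+, forall J, S J `&` C = set0 ->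
    forall z y, `|z| <= r -> S J z -> C y -> e <= `|z - y|.
  apply: filter_forall => J; have [SC | nSC] := pselect (S J `&` C = set0); last first.
    by apply: nearW => e /nSC.
  have K_compact : compact ([set z | `|z| <= r] `&` S J).
    apply: bounded_closed_compact.
      apply: filterS (nbhs_pinfty_ge (num_real r)) => M rM z [zr _].
      exact: le_trans rM.
    apply: closedI; last by apply: closed_bigI => i _; exact: plq_closed.
    have -> : [set z | `|z| <= r] = closed_ball_ Num.norm (0 : 'rV[R]_n) r.
      by apply/seteqP; split => z; rewrite /closed_ball_ /= sub0r normrN.
    exact: closed_closed_ball_.
  have KC : ([set z | `|z| <= r] `&` S J) `&` C = set0 by rewrite -setIA SC setI0.
  apply: filterS (compact_closed_separated K_compact cC KC) => e eKC _ z y zr Sz Cy.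
  exact: eKC.
move=> sep_near; near (0 : R)^'+ => e; exists e; first by near: e; exact: nbhs_right_gt.
move=> x xr FxC; pose Jx : {set 'I_p} := [set i | `[< F i x >]]%SET.
have SJx : S Jx = Fx F x.
  by congr (\bigcap_(i in _) F i); apply/seteqP; split => i; rewrite /= inE => /asboolP.
apply: lb_le_inf => [|_ [y Cy <-]]; first by exists (norm2 (x - y0)), y0.
have sep_x : forall z y, `|z| <= r -> Fx F x z -> C y -> e <= `|z - y|.
  by rewrite -SJx; apply: (near sep_near e) => //; rewrite SJx.
by apply: le_trans (normr_le_norm2 _); apply: sep_x => // i.
Unshelve. all: by end_near.
Qed.

End PiecewiseLinearQuadratic.

Theorem lemma3p4 (R : realType) (n p : nat) (f : 'rV[R]_n -> R)
    (F : 'I_p -> set 'rV[R]_n) (Q : 'I_p -> 'M[R]_n) (a : 'I_p -> 'rV[R]_n)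
    (al : 'I_p -> R) (C : set 'rV[R]_n) :
  strongly_convex f -> plq_rep f F Q a al ->
  C !=set0 -> closed C -> convexS C ->
  forall r : R, 0 < r ->
  exists L : R, 0 < L /\
    forall x xs, norm2 x <= r -> subdiff f x xs ->
      (Fx F x `&` C = set0 -> distf2 f xs x C <= L * (dist x C) ^+ 2) /\
      (Fx F x `&` C !=set0 -> distf2 f xs x C <= L * (dist x (Fx F x `&` C)) ^+ 2).
Proof.
move=> _ plqf C0 cC _ r r0; have [y0 Cy0] := C0.
have [L1 L1_gt0 bregman_le] := plq_bregman_quadratic_bound plqf.
have [M fM] := plq_bounded plqf (2 * r + `|y0|).
have [e e0 sepC] := plq_separation plqf r cC C0.
have y0_ge0 := normr_ge0 y0.
have y0N : `|y0| <= 2 * r + `|y0| by lra.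
have M0 : 0 <= M := le_trans (normr_ge0 _) (fM y0 y0N).
have L0_ge0 : 0 <= 4 * M / e ^+ 2 by rewrite divr_ge0 ?sqr_ge0 // mulr_ge0.
exists (4 * M / e ^+ 2 + L1); split => [|x xs xr xs_sub]; first exact: ltr_wpDl.
have xr' : `|x| <= r := le_trans (normr_le_norm2 x) xr.
split => [FxC | FxC0].
- have xN : `|x| <= 2 * r + `|y0| by lra.
  have zN : `|x + (x - y0)| <= 2 * r + `|y0|.
    by apply: le_trans (ler_normD _ _) _; have := ler_normB x y0; lra.
  have DM := bregman_le_bound y0 xs_sub (fM _ y0N) (fM _ xN) (fM _ zN).
  apply: le_trans (distf2_le_bregman xs_sub Cy0) (le_trans DM _).
  rewrite [_ * _ ^+ 2]mulrDl -[leLHS]addr0.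
  apply: lerD; last by rewrite mulr_ge0 ?sqr_ge0 ?ltW.
  have eC : e <= dist x C := sepC x xr' FxC.
  rewrite -[leRHS]mulrA ler_peMr ?mulr_ge0 // ler_pdivlMl ?exprn_gt0 // mulr1.
  by rewrite lerXn2r ?nnegrE ?(ltW e0) ?(le_trans (ltW e0) eC).
- apply: le_trans (distf2_le_sqr_dist xs_sub L1_gt0 _ FxC0 _) _.
  + by move=> y [].
  + by move=> y [Fxy _]; exact: bregman_le.
  by rewrite ler_wpM2r ?sqr_ge0 // lerDr.
Qed.
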